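(* For the multiplicative monoids of real and complex numbers, $$\mathrm{Rec}((\mathbb{R}, \times, 1)) = \{\emptyset, \{0\}, \mathbb{R}_{<0}, \mathbb{R}_{\le 0}, \mathbb{R}_{>0}, \mathbb{R}_{\ge 0}, \mathbb{R} \setminus \{0\}, \mathbb{R}\}$$ and $$\mathrm{Rec}((\mathbb{C}, \times, 1)) = \{\emptyset, \{0\}, \mathbb{C} \setminus \{0\}, \mathbb{C}\}.$$
   Context: A subset $S$ of a monoid $M$ is recognizable if there exist a finite monoid $N$, a monoid morphism $\varphi\colon M \to N$ and a subset $T \subseteq N$ with $S = \varphi^{-1}(T)$; $\mathrm{Rec}(M)$ denotes the set of recognizable subsets of $M$. *)

From HB Require Import structures.
From mathcomp Require Import all_boot all_order all_algebra.
From mathcomp Require Import boolp classical_sets reals.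
From mathcomp.real_closed Require Import complex.
Set Implicit Arguments. Unset Strict Implicit. Unset Printing Implicit Defensive.
Import Order.TTheory GRing.Theory Num.Theory.
Local Open Scope classical_set_scope.

Definition recognizable (M : Type) (mul : M -> M -> M) (one : M)
    (S : set M) : Prop :=
  exists (N : finType) (op : N -> N -> N) (e : N) (phi : M -> N) (T : set N),
    [/\ associative op, left_id e op & right_id e op] /\
    [/\ phi one = e,
        (forall x y, phi (mul x y) = op (phi x) (phi y))
      & S = phi @^-1` T].

From HB Require Import structures.
From mathcomp Require Import all_boot all_order all_algebra.
From mathcomp Require Import fingroup perm cyclic.
From mathcomp Require Import boolp classical_sets reals.
From mathcomp.real_closed Require Import complex.

(* A monoid morphism into a finite monoid N maps a unit y to an element u
   with a right inverse; right multiplication by u is then a permutation of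
   N, whose order divides #|N|!, so y ^+ #|N|! is mapped to the identity.
   Hence a recognizable subset of a ring is stable under multiplication by
   (#|N|!)-th powers of units.  Every positive real and every nonzero complex
   number is such a power, so a recognizable set of reals only depends on the
   sign, and a recognizable set of complex numbers only on being zero or not.
   Conversely the sign map into the three-element monoid {0, 1, -1} and the
   map x |-> (x == 0) into ({false, true}, ||) recognize all these sets. *)

Set Implicit Arguments.
Unset Strict Implicit.
Unset Printing Implicit Defensive.

Import Order.TTheory GRing.Theory Num.Theory.
Local Open Scope classical_set_scope.
Local Open Scope ring_scope.

Section FiniteMonoid.
Variables (N : finType) (op : N -> N -> N) (e : N).
Hypotheses (opA : associative op) (op1 : right_id e op).

Lemma iter_op_fact_rinv u v : op u v = e -> iter (#|N|)`! (op^~ u) e = e.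
Proof.
move=> uv.
have inj_u : injective (op^~ u).
  by move=> x y /(congr1 (op^~ v)); rewrite /= -!opA uv !op1.
pose s := perm inj_u.
have sX1 : (s ^+ (#|N|)`!)%g = 1%g.
  apply/eqP; rewrite -order_dvdn -cardsT -(card_Sym [set: N]).
  apply: order_dvdG; rewrite inE /perm_on.
  by apply/fintype.subsetP => x; rewrite !inE.
by rewrite -(eq_iter (permE inj_u)) -permX sX1 perm1.
Qed.

End FiniteMonoid.

Lemma recognizable_mulrX_unit (M : unitRingType) (S : set M) :
  recognizable (fun x y : M => x * y) 1 S ->
  exists2 n, (0 < n)%N & forall x y, y \is a GRing.unit -> S (x * y ^+ n) = S x.
Proof.
case=> N [op [e [phi [T [[opA _ op1] [phi1 phiM ->]]]]]].
exists (#|N|)`!; first exact: fact_gt0.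
move=> x y yU; rewrite /preimage /= phiM.
have phiX k : phi (y ^+ k) = iter k (op^~ (phi y)) e.
  by elim: k => [|k IH]; rewrite ?expr0 // exprSr phiM IH.
by rewrite phiX (iter_op_fact_rinv opA op1 (v := phi y^-1)) ?op1 // -phiM mulrV.
Qed.

(* The monoid {0, 1, -1}: None stands for 0 and Some b for (-1) ^ b. *)
Definition sign_mul (a b : option bool) : option bool :=
  if (a, b) is (Some s, Some t) then Some (s (+) t) else None.

Section SignSets.
Variable R : realDomainType.

Definition sign_of (x : R) : option bool := if x == 0 then None else Some (x < 0).

Definition sign_set (b0 bn bp : bool) : set R :=
  [set x | if x == 0 then b0 else if x < 0 then bn else bp].

Lemma sign_ofM : {morph sign_of : x y / x * y >-> sign_mul x y}.
Proof.
by move=> x y; rewrite /sign_of mulf_eq0 mulr_lt0; case: (x == 0); case: (y == 0).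
Qed.

Lemma sign_set_cases (S : set R) :
  (S = set0 \/ S = [set 0] \/ S = [set x | x < 0] \/ S = [set x | x <= 0] \/
   S = [set x | 0 < x] \/ S = [set x | 0 <= x] \/ S = [set x | x != 0] \/
   S = setT) <-> exists b0 bn bp, S = sign_set b0 bn bp.
Proof.
split=> [|[b0 [bn [bp ->]]]].
  case=> [->|[->|[->|[->|[->|[->|[->|->]]]]]]];
    [exists false, false, false | exists true, false, false
    | exists false, true, false | exists true, true, false
    | exists false, false, true | exists true, false, true
    | exists false, true, true | exists true, true, true];
    rewrite predeqE => x; rewrite /sign_set /set1 /= 1?(rwP eqP);
    by case: ltrgt0P => _; split.
case: b0 bn bp => [] [] [];
  do ?[by left; rewrite predeqE => x; rewrite /sign_set /set1 /= 1?(rwP eqP);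
          case: ltrgt0P => _; split
      | right].
by rewrite predeqE => x; rewrite /sign_set /= 1?(rwP eqP); case: ltrgt0P => _; split.
Qed.

End SignSets.

Arguments sign_set {R}.

Section RealClosedField.
Variable R : rcfType.

Lemma exists_pos_root n (x : R) : (0 < n)%N -> 0 < x -> exists2 y, 0 < y & y ^+ n = x.
Proof.
move=> n_gt0 x_gt0.
have [||y /andP[y_ge0 _] /rootP] := @Num.poly_ivt R ('X^n - x%:P) 0 (1 + x).
- by rewrite addr_ge0 ?ltW.
- rewrite !hornerE expr0n eqn0Ngt n_gt0 sub0r oppr_le0 ltW //= subr_ge0.
  by apply: le_trans (ler_eXnr n_gt0 _); rewrite ?lerDl ?lerDr ltW.
rewrite !hornerE => /eqP; rewrite subr_eq0 => /eqP yn.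
exists y => //; rewrite lt_def y_ge0 andbT; apply: contraTneq x_gt0 => y0.
by rewrite -yn y0 expr0n eqn0Ngt n_gt0 ltxx.
Qed.

Lemma recognizable_sign_set (S : set R) :
  recognizable (fun x y : R => x * y) 1 S <-> exists b0 bn bp, S = sign_set b0 bn bp.
Proof.
split=> [/recognizable_mulrX_unit [n n_gt0 SX] | [b0 [bn [bp ->]]]].
  have SMpos z x : 0 < x -> S (z * x) = S z.
    move=> /(exists_pos_root n_gt0) [y y_gt0 <-].
    by rewrite SX // unitfE gt_eqF.
  exists `[< S 0 >], `[< S (-1) >], `[< S 1 >].
  rewrite predeqE => x; rewrite /sign_set /=.
  case: ltrgt0P => [x_gt0|x_lt0|->]; rewrite asboolE //.
  - by rewrite -[x]mul1r SMpos.
  - by rewrite -[x]opprK -[- - x]mulN1r SMpos ?oppr_gt0.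
exists _, sign_mul, (Some false), (@sign_of R),
  [set o | if o is Some s then (if s then bn else bp) else b0].
split; first split.
- by case=> [[]|] [[]|] [[]|].
- by case=> [[]|].
- by case=> [[]|].
split; [by rewrite /sign_of oner_eq0 ltr10 | exact: sign_ofM |].
by rewrite predeqE => x; rewrite /sign_set /sign_of /=; case: (x == 0).
Qed.

End RealClosedField.

Section ClosedField.
Variable F : closedFieldType.

Lemma closed_field_exists_root n (x : F) : (0 < n)%N -> exists y, y ^+ n = x.
Proof.
move=> n_gt0; have /closed_rootP[y /rootP] : size ('X^n - x%:P) != 1.
  by rewrite size_XnsubC // eqSS -lt0n.
by rewrite !hornerE => /eqP; rewrite subr_eq0 => /eqP; exists y.
Qed.

Definition zero_set (b0 b1 : bool) : set F := [set x | if x == 0 then b0 else b1].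

Lemma recognizable_zero_set (S : set F) :
  recognizable (fun x y : F => x * y) 1 S <-> exists b0 b1, S = zero_set b0 b1.
Proof.
split=> [/recognizable_mulrX_unit [n n_gt0 SX] | [b0 [b1 ->]]].
  have S_neq0 x : x != 0 -> S x = S 1.
    have [y <-] := closed_field_exists_root x n_gt0.
    by rewrite expf_eq0 n_gt0 /= => y_neq0; rewrite -[_ ^+ n]mul1r SX ?unitfE.
  exists `[< S 0 >], `[< S 1 >].
  rewrite predeqE => x; rewrite /zero_set /=.
  by have [->|/S_neq0 ->] := eqVneq x 0; rewrite asboolE.
exists _, orb, false, (fun x : F => x == 0), [set b | if b then b0 else b1].
split; first by split; [exact: orbA | by [] | exact: orbF].
split=> //; [exact: oner_eq0 | exact: mulf_eq0].
Qed.

Lemma zero_set_cases (S : set F) :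
  [\/ S = set0, S = [set 0], S = [set x | x != 0] | S = setT] <->
  exists b0 b1, S = zero_set b0 b1.
Proof.
split=> [|[b0 [b1 ->]]].
  case=> ->; [exists false, false | exists true, false
             | exists false, true | exists true, true];
    rewrite predeqE => x; rewrite /zero_set /set1 /= 1?(rwP eqP);
    by case: eqP; split.
case: b0 b1 => [] []; [apply: Or44 | apply: Or42 | apply: Or43 | apply: Or41];
  rewrite predeqE => x; rewrite /zero_set /set1 /= 1?(rwP eqP);
  by case: eqP; split.
Qed.

End ClosedField.

Theorem mainTheorem6 (R : realType) :
  (forall S : set R,
      recognizable (fun x y : R => x * y) 1 S <->
      (S = set0 \/ S = [set 0] \/ S = [set x | x < 0] \/ S = [set x | x <= 0] \/
       S = [set x | 0 < x] \/ S = [set x | 0 <= x] \/ S = [set x | x != 0] \/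
       S = setT)) /\
  (forall S : set R[i],
      recognizable (fun x y : R[i] => x * y) 1 S <->
      [\/ S = set0, S = [set 0], S = [set x | x != 0] | S = setT]).
Proof.
split=> S.
- by rewrite recognizable_sign_set sign_set_cases.
- by rewrite recognizable_zero_set zero_set_cases.
Qed.
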